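(* Let $\mathcal F=(F,\rightarrowtail)$ be a finite argumentation framework. If $A\subseteq F$ is statically tenable, then $A$ is contained in some weakly complete extension of $\mathcal F$.
   Context: An argumentation framework $\mathcal F=(F,\rightarrowtail)$ consists of a set $F$ of arguments and an attack relation $\rightarrowtail\subseteq F\times F$. An argument $a$ attacks a set $B$ if $a\rightarrowtail b$ for some $b\in B$. $A^+=\{x\in F:\exists a\in A,\ a\rightarrowtail x\}$. A set is conflict-free if none of its elements attacks one of its elements. $A\succeq B$ ($A$ is as cogent as $B$) means $A$ is conflict-free and every $b\in B$ that attacks $A$ belongs to $A^+$. $A\subseteq F$ is statically tenable if for every finite conflict-free $B\subseteq F$ there is a conflict-free $C\supseteq A$ with $C\succeq B$. A weakly complete labeling is a map $L:F\to\{\mathtt{in},\mathtt{out},\mathtt{undec}\}$ such that for every $a\in F$: if $L(a)=\mathtt{in}$ then no attacker of $a$ is labeled $\mathtt{in}$; if $L(a)=\mathtt{out}$ then some attacker of $a$ is labeled $\mathtt{in}$; if $L(a)=\mathtt{undec}$ then some attacker of $a$ is labeled $\mathtt{undec}$ and no attacker of $a$ is labeled $\mathtt{in}$. A set is a weakly complete extension if it equals $\{a:L(a)=\mathtt{in}\}$ for some weakly complete labeling $L$. *)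

From mathcomp Require Import all_boot.
Set Implicit Arguments. Unset Strict Implicit. Unset Printing Implicit Defensive.

(* Finite argumentation framework: arguments = finType T, attack relation att : rel T,
   where  att a b  means  a attacks b. *)

Section AF.
Variables (T : finType) (att : rel T).

Definition attacks_set (a : T) (B : {set T}) : bool := [exists b in B, att a b].

Definition plus (A : {set T}) : {set T} := [set x | [exists a in A, att a x]].

Definition conflict_free (A : {set T}) : bool :=
  [forall a in A, forall b in A, ~~ att a b].

Definition cogent (A B : {set T}) : bool :=
  conflict_free A && [forall b in B, attacks_set b A ==> (b \in plus A)].

(* statically tenable (every subset of a finite F is finite) *)
Definition statically_tenable (A : {set T}) : Prop :=
  forall B : {set T}, conflict_free B ->
    exists C : {set T}, [/\ conflict_free C, A \subset C & cogent C B].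

Inductive label := lab_in | lab_out | lab_undec.

Definition is_in (l : label) : bool := if l is lab_in then true else false.

Definition weakly_complete_labeling (L : T -> label) : Prop :=
  forall a : T,
    (L a = lab_in -> forall b, att b a -> L b <> lab_in) /\
    (L a = lab_out -> exists b, att b a /\ L b = lab_in) /\
    (L a = lab_undec -> (exists b, att b a /\ L b = lab_undec) /\
                        (forall b, att b a -> L b <> lab_in)).

Definition weakly_complete_extension (E : {set T}) : Prop :=
  exists L : T -> label, weakly_complete_labeling L /\ E = [set a | is_in (L a)].

End AF.

From mathcomp Require Import all_boot.

Set Implicit Arguments.
Unset Strict Implicit.
Unset Printing Implicit Defensive.

(* Grow A one argument at a time while staying statically tenable.  An argument
   [a] that is neither in E nor attacked by E, all of whose attackers are
   attacked by E, can be added: against a conflict-free B, first answer the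
   members of B compatible with [a] together with [a] itself, and the rest of B
   is answered by [a] or by E.  When no such [a] is left, every argument outside
   E and E^+ has an attacker outside E and E^+, so labelling E in, E^+ out and
   the rest undec is weakly complete. *)

Section WeaklyComplete.
Variables (T : finType) (att : rel T).

Implicit Types (B C E : {set T}) (a b x : T).

Lemma plusP E x : reflect (exists2 a, a \in E & att a x) (x \in plus att E).
Proof. by rewrite inE; apply: exists_inP. Qed.

Lemma plusS E C : E \subset C -> plus att E \subset plus att C.
Proof.
move=> sEC; apply/subsetP => x /plusP [a aE hax].
by apply/plusP; exists a; first exact: (subsetP sEC).
Qed.

Lemma attacks_setP a B : reflect (exists2 b, b \in B & att a b) (attacks_set att a B).
Proof. exact: exists_inP. Qed.

Lemma conflict_freeP E :
  reflect {in E &, forall a b, ~~ att a b} (conflict_free att E).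
Proof.
apply: (iffP forall_inP) => [cfE a b aE bE | cfE a aE].
  by move/forall_inP: (cfE a aE); apply.
by apply/forall_inP => b; apply: cfE.
Qed.

Lemma conflict_freeU1 a C :
  conflict_free att C -> ~~ att a a ->
  {in C, forall c, ~~ att a c && ~~ att c a} -> conflict_free att (a |: C).
Proof.
move=> /conflict_freeP cfC naa aC; apply/conflict_freeP.
move=> x y /setU1P[->|xC] /setU1P[->|yC] //.
- by case/andP: (aC y yC).
- by case/andP: (aC x xC).
- exact: cfC.
Qed.

Lemma tenable_conflict_free E : statically_tenable att E -> conflict_free att E.
Proof.
move=> tE; have [|C [/conflict_freeP cfC sEC _]] := tE set0.
  by apply/conflict_freeP => x; rewrite inE.
by apply/conflict_freeP => x y xE yE; apply: cfC; apply: (subsetP sEC).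
Qed.

Lemma tenableU1 E a :
  statically_tenable att E -> a \notin plus att E ->
  (forall b, att b a -> b \in plus att E) -> statically_tenable att (a |: E).
Proof.
move=> tE aNP defended B cfB.
have naa : ~~ att a a by apply/negP => /defended; apply/negP.
set B' := a |: [set b in B | ~~ att b a & ~~ att a b].
have cfB' : conflict_free att B'.
  apply: conflict_freeU1 => //; last by move=> b; rewrite inE => /and3P[_ -> ->].
  apply/conflict_freeP => x y; rewrite !inE => /andP[xB _] /andP[yB _].
  by move/conflict_freeP: cfB; apply.
have [C [cfC sEC /andP[_ /forall_inP cogC]]] := tE B' cfB'.
have CNa c : c \in C -> ~~ att c a.
  move=> cC; apply/negP => /defended /plusP [e eE hec].
  by move/conflict_freeP: cfC => /(_ e c (subsetP sEC e eE) cC); rewrite hec.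
have aNC c : c \in C -> ~~ att a c.
  move=> cC; apply/negP => hac.
  have /implyP/(_ _)/plusP [|c' c'C] := cogC a (setU11 _ _).
    by apply/attacks_setP; exists c.
  by apply/negP; apply: CNa.
have cfaC : conflict_free att (a |: C).
  by apply: conflict_freeU1 => // c cC; rewrite aNC ?CNa.
exists (a |: C); split=> //; first exact: setUS.
rewrite /cogent cfaC /=.
apply/forall_inP => b bB; apply/implyP => /attacks_setP [x /setU1P xaC hbx].
have sCaC : C \subset a |: C := subsetUr _ _.
have [hba|hbNa] := boolP (att b a).
  by apply: (subsetP (plusS (subset_trans sEC sCaC))); apply: defended.
have [hab|haNb] := boolP (att a b).
  by apply/plusP; exists a; first exact: setU11.
case: xaC => [xa|xC]; first by move: hbNa; rewrite -xa hbx.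
apply: (subsetP (plusS sCaC)); apply: (implyP (cogC b _)).
  by rewrite !inE bB hbNa haNb orbT.
by apply/attacks_setP; exists x.
Qed.

Definition undec_set E : {set T} := ~: (E :|: plus att E).

Lemma in_undec_set E x : (x \in undec_set E) = (x \notin E) && (x \notin plus att E).
Proof. by rewrite !inE negb_or. Qed.

Definition canonical_labeling E x : label :=
  if x \in E then lab_in else if x \in plus att E then lab_out else lab_undec.

Lemma canonical_labeling_weakly_complete E :
  conflict_free att E -> [forall x in undec_set E, exists b in undec_set E, att b x] ->
  weakly_complete_labeling att (canonical_labeling E).
Proof.
move=> /conflict_freeP cfE /forall_inP supported x.
rewrite /canonical_labeling.
have notin b : att b x -> x \notin plus att E -> b \notin E.
  by move=> hbx; apply: contra => bE; apply/plusP; exists b.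
case: ifPn => [xE|xNE]; last case: ifPn => [xP|xNP].
- split; last by split.
  move=> _ b hbx; case: ifPn => [bE|_]; last by case: ifP.
  by move: (cfE b x bE xE); rewrite hbx.
- split=> //; split=> // _.
  by case/plusP: xP => b bE hbx; exists b; rewrite bE.
have /exists_inP [b bU hbx] : [exists b in undec_set E, att b x].
  by apply: supported; rewrite in_undec_set xNE.
move: bU; rewrite in_undec_set => /andP[bNE bNP].
do !split=> //; first by exists b; rewrite (negbTE bNE) (negbTE bNP).
by move=> c hcx; rewrite (negbTE (notin c hcx xNP)); case: ifP.
Qed.

Lemma canonical_labeling_in E : E = [set a | is_in (canonical_labeling E a)].
Proof.
by apply/setP => x; rewrite inE /canonical_labeling; case: (x \in E); case: (x \in plus att E).
Qed.

Lemma tenable_sub_weakly_complete E :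
  statically_tenable att E ->
  exists2 E', weakly_complete_extension att E' & E \subset E'.
Proof.
have [n] := ubnP #|~: E|; elim: n E => // n IH E ltEn tE.
have [supported|] :=
  boolP [forall x in undec_set E, exists b in undec_set E, att b x].
  exists E => //; exists (canonical_labeling E); split; last exact: canonical_labeling_in.
  by apply: canonical_labeling_weakly_complete => //; apply: tenable_conflict_free.
move=> /forall_inPn [a]; rewrite in_undec_set => /andP[aNE aNP] /exists_inPn aUnattacked.
have defended b : att b a -> b \in plus att E.
  move=> hba; apply/negPn/negP => bNP.
  have bNE : b \notin E by apply: contra aNP => bE; apply/plusP; exists b.
  by move: (aUnattacked b); rewrite in_undec_set bNE bNP hba => /(_ isT).
have ltaEn : #|~: (a |: E)| < n.
  rewrite -ltnS; apply: leq_trans ltEn; apply: proper_card; rewrite properC.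
  by apply/properP; split; [exact: subsetUr | exists a; rewrite ?setU11].
have [E' wcE' saEE'] := IH (a |: E) ltaEn (tenableU1 tE aNP defended).
by exists E' => //; apply: subset_trans (subsetUr _ _) saEE'.
Qed.

End WeaklyComplete.

Theorem mainTheorem14 (T : finType) (att : rel T) (A : {set T}) :
  statically_tenable att A ->
  exists E : {set T}, weakly_complete_extension att E /\ A \subset E.
Proof.
by move=> /tenable_sub_weakly_complete [E wcE sAE]; exists E.
Qed.
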